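(* Let $I$ be a prime ideal of $\mathbb{R}[x]=\mathbb{R}[x_1,\dots,x_n]$ such that $I'=\mathbb{C}[x]I$ is not prime in $\mathbb{C}[x]$. Then there exists an irreducible polynomial $g\in\mathbb{C}[x]\setminus I'$ such that $g\overline{g}\in I$.
   Context: $\mathbb{C}[x]I=\{\sum p_ih_i: p_i\in\mathbb{C}[x],h_i\in I\}$ is the ideal of $\mathbb{C}[x]$ generated by $I$. For $g=\sum_a g_a x^a\in\mathbb{C}[x]$, $\overline{g}=\sum_a\overline{g_a}x^a$ (coefficientwise complex conjugation). *)

From HB Require Import structures.
From mathcomp Require Import all_boot all_order all_algebra.
From mathcomp Require Import mpoly.
From mathcomp Require Import complex.
From mathcomp Require Import reals.
Set Implicit Arguments. Unset Strict Implicit. Unset Printing Implicit Defensive.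
Import Order.TTheory GRing.Theory Num.Theory.
Local Open Scope ring_scope.

Definition is_ideal (A : comNzRingType) (I : A -> Prop) : Prop :=
  [/\ I 0,
      (forall a b, I a -> I b -> I (a + b)) &
      (forall r a, I a -> I (r * a))].

Definition prime_ideal (A : comNzRingType) (I : A -> Prop) : Prop :=
  [/\ is_ideal I, ~ I 1 &
      (forall a b, I (a * b) -> I a \/ I b)].

Definition is_unit (A : comNzRingType) (u : A) : Prop := exists v : A, v * u = 1.

Definition irreducible_elt (A : comNzRingType) (g : A) : Prop :=
  [/\ g != 0, ~ is_unit g &
      (forall a b : A, g = a * b -> is_unit a \/ is_unit b)].

Definition realC_mpoly (n : nat) (R : rcfType) (p : {mpoly R[n]}) : {mpoly R[i][n]} :=
  map_mpoly (fun r : R => (r%:C)%C) p.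

Definition conj_mpoly (n : nat) (R : rcfType) (g : {mpoly R[i][n]}) : {mpoly R[i][n]} :=
  map_mpoly (@conjc R) g.

Definition extend_ideal (n : nat) (R : rcfType) (I : {mpoly R[n]} -> Prop)
  : {mpoly R[i][n]} -> Prop :=
  fun q => exists s : seq ({mpoly R[i][n]} * {mpoly R[n]}),
    (forall ph, ph \in s -> I ph.2) /\
    q = \sum_(ph <- s) ph.1 * realC_mpoly ph.2.

From HB Require Import structures.
From mathcomp Require Import all_boot all_order all_algebra.
From mathcomp Require Import mpoly complex reals.
From mathcomp Require Import zify.
From Stdlib Require Import Classical.
Set Implicit Arguments. Unset Strict Implicit. Unset Printing Implicit Defensive.
Import Order.TTheory GRing.Theory Num.Theory.
Local Open Scope ring_scope.

(* The norm [N g = g * conj g] of a complex polynomial is real and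
   multiplicative, and [C[x] I] meets [R[x]] in [I] (take real parts of the
   coefficients).  If [a b] lies in [C[x] I] with [a] and [b] outside it, then
   [N a * N b = N (a b)] lies in [I], so by primality one of them, say [N a],
   does.  Then [a] is not a unit (its norm would be a unit), and if it is
   reducible, [a = b c], one of [N b], [N c] again lies in [I]; that factor
   is outside the ideal [C[x] I] and has smaller support, so this descent
   stops at an irreducible [g]. *)

Section IdealFacts.
Variable A : comNzRingType.

Lemma ideal_sum (J : A -> Prop) (T : eqType) (s : seq T) (F : T -> A) :
  is_ideal J -> (forall x, x \in s -> J (F x)) -> J (\sum_(x <- s) F x).
Proof.
case=> J0 JD _; elim: s => [|x s IHs] Js; first by rewrite big_nil.
rewrite big_cons; apply: JD; first by apply: Js; rewrite mem_head.
by apply: IHs => y ys; apply: Js; rewrite in_cons ys orbT.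
Qed.

Lemma nonprime_ideal_factors (J : A -> Prop) :
  is_ideal J -> ~ J 1 -> ~ prime_ideal J ->
  exists a b, [/\ J (a * b), ~ J a & ~ J b].
Proof.
move=> idJ J1 notprimeJ; apply: NNPP => noab; apply: notprimeJ.
split=> // a b Jab; apply: NNPP => /not_or_and[nJa nJb].
by apply: noab; exists a, b.
Qed.

Lemma reducible_split (a : A) : ~ is_unit a -> a != 0 -> ~ irreducible_elt a ->
  exists b c, [/\ a = b * c, ~ is_unit b & ~ is_unit c].
Proof.
move=> nua a0 nirra; apply: NNPP => nosplit; apply: nirra; split=> // b c abc.
by apply: NNPP => /not_or_and[nub nuc]; apply: nosplit; exists b, c.
Qed.

End IdealFacts.

Section MpolySize.
Variables (F : fieldType) (n : nat).

Lemma msize_nonunit_gt1 (c : {mpoly F[n]}) :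
  c != 0 -> ~ is_unit c -> (1 < msize c)%N.
Proof.
move=> c0 nuc; rewrite ltnNge; apply/negP => /msize1_polyC cE; apply: nuc.
move: c0 cE; set x := c@_0 => c0 cE.
have x0 : x != 0 by apply: contraNneq c0; rewrite cE => ->.
by exists x^-1%:MP; rewrite cE -mpolyCM mulVf.
Qed.

Lemma msize_mul_nonunit (b c : {mpoly F[n]}) : b != 0 -> c != 0 ->
  ~ is_unit c -> (msize b < msize (b * c))%N.
Proof.
move=> b0 c0 nuc; have := msize_nonunit_gt1 c0 nuc.
by rewrite msizeM_proper ?mulf_neq0 ?mleadc_eq0 //; lia.
Qed.

End MpolySize.

Section Descent.
Variables (F : fieldType) (n : nat) (B : comNzRingType).
Variables (N : {mpoly F[n]} -> B) (I : B -> Prop) (E : {mpoly F[n]} -> Prop).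
Hypotheses (N1 : N 1 = 1) (NM : forall a b, N (a * b) = N a * N b).
Hypotheses (primeI : prime_ideal I) (idealE : is_ideal E).

Lemma nonunit_of_prime_norm (a : {mpoly F[n]}) : I (N a) -> ~ is_unit a.
Proof.
have [[_ _ IM] I1 _] := primeI.
by move=> INa [v va1]; apply: I1; rewrite -N1 -va1 NM; apply: IM.
Qed.

Lemma irreducible_descent (a : {mpoly F[n]}) : ~ E a -> I (N a) ->
  exists g, [/\ irreducible_elt g, ~ E g & I (N g)].
Proof.
have [k] := ubnP (msize a); elim: k a => // k IHk a ltak nEa INa.
have [[E0 _ EM] [_ _ Iprime]] := (idealE, primeI).
have a0 : a != 0 by apply: contra_notN nEa => /eqP->.
have nua := nonunit_of_prime_norm INa.
have [irra | /(reducible_split nua a0) [b [c [abc nub nuc]]]] :=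
  classic (irreducible_elt a); first by exists a.
move: a0; rewrite abc mulf_eq0 negb_or => /andP[b0 c0].
have nEb : ~ E b by apply: contra_not nEa => Eb; rewrite abc mulrC; apply: EM.
have nEc : ~ E c by apply: contra_not nEa => Ec; rewrite abc; apply: EM.
move: INa; rewrite abc NM => /Iprime[INb | INc].
- apply: IHk INb => //; have := msize_mul_nonunit b0 c0 nuc.
  by rewrite -abc; lia.
- apply: IHk INc => //; have := msize_mul_nonunit c0 b0 nub.
  by rewrite mulrC -abc; lia.
Qed.

End Descent.

Section ComplexPolynomials.
Variables (R : rcfType) (n : nat).
Local Notation CP := {mpoly R[i][n]}.
Local Notation RP := {mpoly R[n]}.

Definition re_mpoly (q : CP) : RP := map_mpoly (@complex.Re R) q.

HB.instance Definition _ :=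
  GRing.Additive.copy re_mpoly (map_mpoly (@complex.Re R)).

Lemma mcoeff_re_mpoly (q : CP) m : (re_mpoly q)@_m = complex.Re q@_m.
Proof. exact: mcoeff_map_mpoly. Qed.

Lemma mcoeff_realC_mpoly (h : RP) m : (realC_mpoly h)@_m = (h@_m)%:C%C.
Proof. exact: (mcoeff_map_mpoly (real_complex R)). Qed.

Lemma mcoeff_conj_mpoly (g : CP) m : (conj_mpoly g)@_m = (g@_m)^*%C.
Proof. exact: (mcoeff_map_mpoly (@conjc R)). Qed.

Lemma realC_mpolyM (a b : RP) :
  realC_mpoly (a * b) = realC_mpoly a * realC_mpoly b.
Proof. exact: (rmorphM (map_mpoly (real_complex R))). Qed.

Lemma realC_mpoly1 : realC_mpoly (1 : RP) = 1.
Proof. exact: (rmorph1 (map_mpoly (real_complex R))). Qed.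

Lemma conj_mpolyM (a b : CP) : conj_mpoly (a * b) = conj_mpoly a * conj_mpoly b.
Proof. exact: (rmorphM (map_mpoly (@conjc R))). Qed.

Lemma conj_mpoly1 : conj_mpoly (1 : CP) = 1.
Proof. exact: (rmorph1 (map_mpoly (@conjc R))). Qed.

Lemma conj_mpolyK : involutive (@conj_mpoly n R).
Proof. by move=> a; apply/mpolyP=> m; rewrite !mcoeff_conj_mpoly conjcK. Qed.

Lemma re_mpoly_mulr_realC (p : CP) (h : RP) :
  re_mpoly (p * realC_mpoly h) = re_mpoly p * h.
Proof.
apply/mpolyP=> m; rewrite mcoeff_re_mpoly !mcoeffM raddf_sum.
apply: eq_bigr => k _; rewrite mcoeff_re_mpoly mcoeff_realC_mpoly.
by case: (p@_k.1) => a b /=; rewrite !mulr0 subr0.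
Qed.

Lemma realC_mpolyK : cancel (@realC_mpoly n R) re_mpoly.
Proof.
move=> h; apply/mpolyP=> m.
by rewrite mcoeff_re_mpoly mcoeff_realC_mpoly.
Qed.

Lemma realC_mpoly_inj : injective (@realC_mpoly n R).
Proof. exact: can_inj realC_mpolyK. Qed.

Lemma conj_mpoly_fixed_real (q : CP) :
  conj_mpoly q = q -> realC_mpoly (re_mpoly q) = q.
Proof.
move=> qJ; apply/mpolyP=> m; rewrite mcoeff_realC_mpoly mcoeff_re_mpoly.
have := congr1 (mcoeff m) qJ; rewrite mcoeff_conj_mpoly.
case: (q@_m) => a b [bN] /=; congr (_ +i* _)%C.
have : b *+ 2 == 0 by rewrite mulr2n -{1}bN addNr.
by rewrite mulrn_eq0 => /eqP.
Qed.

End ComplexPolynomials.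

(* Locked: otherwise [rewrite] unfolds [map_mpoly] while matching two norms
   and diverges. *)
HB.lock Definition cnorm_mpoly (R : rcfType) (n : nat) (q : {mpoly R[i][n]}) :
  {mpoly R[n]} := re_mpoly (q * conj_mpoly q).

Section ComplexNormAndIdeal.
Variables (R : rcfType) (n : nat).
Local Notation CP := {mpoly R[i][n]}.
Local Notation RP := {mpoly R[n]}.

Lemma realC_cnorm_mpoly (q : CP) :
  realC_mpoly (cnorm_mpoly q) = q * conj_mpoly q.
Proof.
rewrite cnorm_mpoly.unlock conj_mpoly_fixed_real //.
by rewrite conj_mpolyM conj_mpolyK mulrC.
Qed.

Lemma cnorm_mpolyM (a b : CP) :
  cnorm_mpoly (a * b) = cnorm_mpoly a * cnorm_mpoly b.
Proof.
apply: realC_mpoly_inj.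
by rewrite realC_mpolyM !realC_cnorm_mpoly conj_mpolyM mulrACA.
Qed.

Lemma cnorm_mpoly1 : cnorm_mpoly (1 : CP) = 1.
Proof.
apply: realC_mpoly_inj.
by rewrite realC_cnorm_mpoly conj_mpoly1 realC_mpoly1 mulr1.
Qed.

Lemma extend_ideal_is_ideal (I : RP -> Prop) : is_ideal (extend_ideal I).
Proof.
split.
- by exists [::]; rewrite big_nil.
- move=> _ _ [s [Is ->]] [t [It ->]]; exists (s ++ t); rewrite big_cat.
  by split=> // ph; rewrite mem_cat => /orP[/Is | /It].
- move=> r _ [s [Is ->]]; exists [seq (r * ph.1, ph.2) | ph <- s].
  rewrite big_map mulr_sumr; split.
    by move=> ? /mapP[ph phs ->]; exact: Is phs.
  by apply: eq_bigr => ph _; rewrite mulrA.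
Qed.

Lemma extend_ideal_realC (I : RP -> Prop) (h : RP) :
  is_ideal I -> extend_ideal I (realC_mpoly h) -> I h.
Proof.
move=> idI [s [Is hE]]; rewrite -(realC_mpolyK h) hE raddf_sum.
apply: ideal_sum => // ph phs /=; rewrite re_mpoly_mulr_realC.
by case: idI => _ _ IM; apply/IM/Is.
Qed.

End ComplexNormAndIdeal.

Theorem lemma3p4 (R : realType) (n : nat) (I : {mpoly R[n]} -> Prop) :
  prime_ideal I ->
  ~ prime_ideal (extend_ideal I) ->
  exists g : {mpoly R[i][n]},
    [/\ irreducible_elt g,
        ~ extend_ideal I g &
        exists h : {mpoly R[n]}, I h /\ realC_mpoly h = g * conj_mpoly g].
Proof.
move=> primeI notprimeE; have [idealI I1 Iprime] := primeI.
have idealE := extend_ideal_is_ideal I.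
have E1 : ~ extend_ideal I 1.
  by rewrite -(@realC_mpoly1 R n) => /(extend_ideal_realC idealI)/I1.
have [a [b [Eab nEa nEb]]] := nonprime_ideal_factors idealE E1 notprimeE.
have descent := irreducible_descent (@cnorm_mpoly1 R n) (@cnorm_mpolyM R n)
  primeI idealE.
suff [g [irrg nEg INg]] :
    exists g, [/\ irreducible_elt g, ~ extend_ideal I g & I (cnorm_mpoly g)].
  by exists g; split=> //; exists (cnorm_mpoly g); rewrite realC_cnorm_mpoly.
have : I (cnorm_mpoly (a * b)).
  apply: extend_ideal_realC => //; rewrite realC_cnorm_mpoly.
  by case: idealE => _ _ EM; rewrite mulrC; apply: EM.
by rewrite cnorm_mpolyM => /Iprime[/(descent a nEa) | /(descent b nEb)].
Qed.
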